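(* Let $B$ be a finite set of closed, bounded line segments in $\mathbb{R}^2$ and let $R(B)=\{p\in\mathbb{R}^2: \text{every line through } p \text{ intersects } B\}$. If a maximal region of $R(B)$ is a line segment, then that line segment is contained in $B$ (i.e., in the union of the segments of $B$).
   Context: A region is a bounded, closed, connected subset of $\mathbb{R}^2$. For a set $P\subseteq\mathbb{R}^2$, a maximal region of $P$ is a region $R$ such that for every point $p\in R$ there is an open ball $A$ centered at $p$ with $A\cap R = A\cap P$. A line intersects $B$ if it meets at least one segment of $B$. *)

(* the plane is R * R for R : realType, with the
   product topology (= Euclidean topology). *)
From HB Require Import structures.
From mathcomp Require Import all_boot all_order all_algebra.
From mathcomp Require Import all_classical all_reals topology normedtype.
Set Implicit Arguments. Unset Strict Implicit. Unset Printing Implicit Defensive.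
Import Order.TTheory GRing.Theory Num.Theory numFieldNormedType.Exports.
Local Open Scope ring_scope.
Local Open Scope classical_set_scope.

Section Plane.
Variable R : realType.

Definition pt := (R * R)%type.

Definition segment (a b : pt) : set pt :=
  [set p | exists t : R, 0 <= t <= 1 /\
     p = ((1 - t) * a.1 + t * b.1, (1 - t) * a.2 + t * b.2)].

Definition unionB (B : seq (pt * pt)) : set pt :=
  [set p | exists2 s, s \in B & segment s.1 s.2 p].

Definition line_meets (p d : pt) (B : seq (pt * pt)) : Prop :=
  exists t : R, unionB B (p.1 + t * d.1, p.2 + t * d.2).

Definition RB (B : seq (pt * pt)) : set pt :=
  [set p | forall d : pt, d != (0, 0) -> line_meets p d B].

Definition eball (p : pt) (r : R) : set pt :=
  [set q | (q.1 - p.1) ^+ 2 + (q.2 - p.2) ^+ 2 < r ^+ 2].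

Definition bounded_pt (S : set pt) : Prop :=
  exists M : R, forall p, S p -> `|p.1| <= M /\ `|p.2| <= M.

Definition is_region (S : set pt) : Prop :=
  bounded_pt S /\ closed (S : set (R * R)%type) /\ connected (S : set (R * R)%type).

Definition maximal_region (P S : set pt) : Prop :=
  is_region S /\
  forall p, S p -> exists r : R, 0 < r /\ eball p r `&` S = eball p r `&` P.

End Plane.

(* Let p be an interior point of the segment [a, b], assume p is not on B, and
   measure a point x by its coordinates along u = b - a and across it,
   (dotp u p x, cross u p x).  Maximality makes the chord of [a, b] around p lie in
   R(B), while the points p + Y u^perp with small Y <> 0 are outside R(B).
   - Through p, the tilted lines "height = c * abscissa" (c = e or -e, e small)
     meet B.
   - Through p + d u^perp and p - d u^perp (d small) there are lines missing B;
     they cannot cross the chord, so they are graphs of nearly horizontal affine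
     maps L+ and L- with L+(0) > 0 > L-(0).
   The endpoints of B have bounded abscissas, and each lies on the axis or at
   height at least some m > 0; all the lines above stay below height m there.
   Hence a segment of B met by the tilted line of slope c but missed by L+ and
   L- has an endpoint (a, 0) with c * a * L(a) < 0 for both L.  Taking c = e and
   c = -e gives a1 and a2 with a1 * L(a1) < 0 < a2 * L(a2) for both L, which
   orders 1/a1 and 1/a2 one way through L+ and the other way through L-.
   Finally, B is closed, so the endpoints a and b are on B as well. *)

From mathcomp Require Import all_boot all_order all_algebra.
From mathcomp Require Import all_classical all_reals topology normedtype.
From mathcomp Require Import ring lra.
Set Implicit Arguments. Unset Strict Implicit. Unset Printing Implicit Defensive.
Import Order.TTheory GRing.Theory Num.Theory numFieldNormedType.Exports.
Local Open Scope ring_scope.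
Local Open Scope classical_set_scope.

Section SignArithmetic.
Variable R : realFieldType.
Implicit Types a c e g l m w x y z : R.

Lemma same_sign_mulr_ge0 x z w : 0 < x * z -> (0 <= w * x) = (0 <= w * z).
Proof.
have [z0|z0|->] := ltgtP z 0 => xz; last by rewrite mulr0 ltxx in xz.
  by rewrite nmulr_lgt0 // in xz; rewrite !nmulr_lge0.
by rewrite pmulr_lgt0 // in xz; rewrite !pmulr_lge0.
Qed.

Lemma same_sign_mulr_gt0 x z w : 0 < x * z -> (0 < w * x) = (0 < w * z).
Proof.
have [z0|z0|->] := ltgtP z 0 => xz; last by rewrite mulr0 ltxx in xz.
  by rewrite nmulr_lgt0 // in xz; rewrite !nmulr_lgt0.
by rewrite pmulr_lgt0 // in xz; rewrite !pmulr_lgt0.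
Qed.

Lemma far_offset_sign m y l : m <= `|y| -> `|l| < m -> 0 < y * (y - l).
Proof.
move=> my; rewrite ltr_norml => /andP[l1 l2].
by have [y0|y0] := leP 0 y; [rewrite ger0_norm in my|rewrite ltr0_norm in my]; nra.
Qed.

Lemma far_endpoints_contra m y1 y2 c1 c2 l1 l2 :
  m <= `|y1| -> m <= `|y2| -> `|c1| < m -> `|c2| < m -> `|l1| < m -> `|l2| < m ->
  (y1 - c1) * (y2 - c2) <= 0 -> 0 < (y1 - l1) * (y2 - l2) -> False.
Proof.
move=> m1 m2 c1m c2m l1m l2m hit miss.
have hc := mulr_gt0 (far_offset_sign m1 c1m) (far_offset_sign m2 c2m).
have hl := mulr_gt0 (far_offset_sign m1 l1m) (far_offset_sign m2 l2m).
rewrite mulrACA in hc; rewrite mulrACA in hl.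
have : y1 * y2 < 0 by rewrite ltNge; apply/negP => h; move: hc; rewrite ltNge mulr_ge0_le0.
by rewrite ltNge ltW // -(pmulr_lgt0 _ miss).
Qed.

Lemma axis_endpoint_sign m y2 c1 c2 l1 l2 :
  m <= `|y2| -> `|c2| < m -> `|l2| < m -> c1 != 0 ->
  (0 - c1) * (y2 - c2) <= 0 -> 0 < (0 - l1) * (y2 - l2) -> c1 * l1 < 0.
Proof.
move=> m2 c2m l2m c1n hit miss.
have hc := far_offset_sign m2 c2m; have hl := far_offset_sign m2 l2m.
have y2n : y2 != 0 by apply: contraTneq hc => ->; rewrite mul0r ltxx.
have c1y : 0 < c1 * y2.
  rewrite lt0r mulf_neq0 //= (same_sign_mulr_ge0 _ hc).
  by rewrite sub0r mulNr oppr_le0 in hit.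
have l1y : 0 < - l1 * y2 by rewrite (same_sign_mulr_gt0 _ hl) -sub0r.
nra.
Qed.

(* Dividing by [a1^2] and [a2^2] gives [g1 / a1 < g1 / a2] and
   [g2 / a1 < g2 / a2], incompatible since [g1 > 0 > g2]. *)
Lemma two_lines_contra a1 a2 e1 g1 e2 g2 : 0 < g1 -> g2 < 0 ->
  a1 * (e1 * a1 + g1) < 0 -> a1 * (e2 * a1 + g2) < 0 ->
  0 < a2 * (e1 * a2 + g1) -> 0 < a2 * (e2 * a2 + g2) -> False.
Proof.
move=> g1p g2n h1 h2 h3 h4.
have a1n : a1 != 0 by apply: contraTneq h1 => ->; rewrite mul0r ltxx.
have a2n : a2 != 0 by apply: contraTneq h3 => ->; rewrite mul0r ltxx.
have s1 : 0 < a1 * a1 by rewrite -expr2 exprn_even_gt0.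
have s2 : 0 < a2 * a2 by rewrite -expr2 exprn_even_gt0.
have k1 : g1 * (a1 * a2 * (a2 - a1)) < 0 by nra.
have k2 : g2 * (a1 * a2 * (a2 - a1)) < 0 by nra.
nra.
Qed.

Lemma small_pos_witness c D m : 0 <= c -> 0 < D -> 0 < m ->
  exists2 e, 0 < e < D & e * c < m.
Proof.
move=> c0 D0 m0; have c1 : 0 < c + 1 by rewrite ltr_wpDl.
set e := Num.min (D / 2) (m / (c + 1)).
have e0 : 0 < e by rewrite lt_min !divr_gt0.
have ec : e * (c + 1) <= m by rewrite -ler_pdivlMr // ge_min lexx orbT.
exists e; last by rewrite mulrDr mulr1 in ec; lra.
by rewrite e0 gt_min ltr_pdivrMr // ltr_pMr // ltr1n.
Qed.

End SignArithmetic.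

Lemma finite_bound_and_gap (R : realDomainType) (T : eqType) (f g : T -> R) (s : seq T) :
  exists K m, [/\ 0 <= K, 0 < m &
    forall x, x \in s -> `|f x| <= K /\ (g x = 0 \/ m <= `|g x|)].
Proof.
elim: s => [|y s [K [m [K0 m0 Hs]]]]; first by exists 0, 1.
pose my := if g y == 0 then m else Num.min m `|g y|.
have my0 : 0 < my by rewrite /my; case: eqP => // /eqP gy; rewrite lt_min m0 normr_gt0.
have mym : my <= m by rewrite /my; case: eqP => _; rewrite ?ge_min lexx.
exists (Num.max K `|f y|), my; split => //; first by rewrite le_max K0.
move=> x; rewrite in_cons => /orP[/eqP->|/Hs[fx gx]].
  split; first by rewrite le_max lexx orbT.
  by rewrite /my; case: eqP => [|_]; [left|right; rewrite ge_min lexx orbT].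
split; first by rewrite le_max fx.
by case: gx => [|gx]; [left|right; exact: le_trans gx].
Qed.

Section Plane.
Variable R : realType.
Implicit Types (a b p q d x y : pt R) (B : seq (pt R * pt R)).

Definition lerp x y (t : R) : pt R :=
  ((1 - t) * x.1 + t * y.1, (1 - t) * x.2 + t * y.2).
Definition shift q d (t : R) : pt R := (q.1 + t * d.1, q.2 + t * d.2).
Definition vec x y : pt R := (y.1 - x.1, y.2 - x.2).
Definition perp d : pt R := (- d.2, d.1).
Definition norm2 d : R := d.1 * d.1 + d.2 * d.2.
Definition dotp d q x : R := d.1 * (x.1 - q.1) + d.2 * (x.2 - q.2).
Definition cross d q x : R := d.1 * (x.2 - q.2) - d.2 * (x.1 - q.1).

Lemma norm2_gt0 d : d != (0, 0) -> 0 < norm2 d.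
Proof.
case: d => d1 d2 dn; rewrite /norm2 /= lt0r -!expr2 addr_ge0 ?sqr_ge0 // andbT.
apply: contra dn; rewrite paddr_eq0 ?sqr_ge0 // !sqrf_eq0.
by case/andP=> /eqP-> /eqP->.
Qed.

Lemma vec_neq0 x y : x != y -> vec x y != (0, 0).
Proof.
apply: contraNneq; case=> /eqP + /eqP; rewrite !subr_eq0 => /eqP e1 /eqP e2.
by rewrite [x]surjective_pairing [y]surjective_pairing e1 e2.
Qed.

Lemma cross_rebase q q' d x : cross d q x = cross d q' x + cross d q q'.
Proof. rewrite /cross; ring. Qed.

Lemma cross_lerp d q x y l :
  cross d q (lerp x y l) = (1 - l) * cross d q x + l * cross d q y.
Proof. rewrite /cross /lerp /=; ring. Qed.

Lemma cross_eq0_shift d q x : d != (0, 0) -> cross d q x = 0 ->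
  x = shift q d (dotp d q x / norm2 d).
Proof.
move=> /norm2_gt0 /lt0r_neq0 dn x0; case: x x0 => x1 x2 x0.
have e1 : (x1 - q.1) * norm2 d = dotp d q (x1, x2) * d.1.
  apply/eqP; rewrite -subr_eq0; apply/eqP; transitivity (- d.2 * cross d q (x1, x2)).
    by rewrite /dotp /norm2 /cross /=; ring.
  by rewrite x0 mulr0.
have e2 : (x2 - q.2) * norm2 d = dotp d q (x1, x2) * d.2.
  apply/eqP; rewrite -subr_eq0; apply/eqP; transitivity (d.1 * cross d q (x1, x2)).
    by rewrite /dotp /norm2 /cross /=; ring.
  by rewrite x0 mulr0.
by rewrite /shift; congr (_, _); rewrite mulrAC -?e1 -?e2 mulfK // addrC subrK.
Qed.

Lemma convex_root_mul_le0 (x y l : R) : 0 <= l <= 1 ->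
  (1 - l) * x + l * y = 0 -> x * y <= 0.
Proof.
case/andP=> l0 l1 e; have h : l * (x * y) = - ((1 - l) * (x * x)).
  have ly : l * y = - ((1 - l) * x) by apply/eqP; rewrite -subr_eq0 opprK addrC e.
  by rewrite mulrCA ly; ring.
have [l_0|lp] := eqVneq l 0; last by nra.
by move: e; rewrite l_0 subr0 mul1r mul0r addr0 => ->; rewrite mul0r.
Qed.

Lemma mul_le0_convex_root (x y : R) : x * y <= 0 ->
  exists l, 0 <= l <= 1 /\ (1 - l) * x + l * y = 0.
Proof.
move=> xy; have [exy|yx] := eqVneq x y.
  rewrite exy in xy *.
  exists 0; rewrite lexx ler01 subr0 mul1r mul0r addr0; split => //.
  by apply/eqP; rewrite -sqrf_eq0 eq_le sqr_ge0 andbT expr2.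
have dn : x - y != 0 by rewrite subr_eq0.
exists (x / (x - y)); split; last by field.
have [d0|d0] := ltP 0 (x - y).
  by rewrite ler_pdivrMr // mul1r divr_ge0 /=; nra.
have {}d0 : x - y < 0 by rewrite lt_neqAle dn.
rewrite -(divrNN x) ler_pdivrMr ?oppr_gt0 // mul1r divr_ge0 /= ?oppr_ge0; nra.
Qed.

Lemma line_meetsP {q d B} : d != (0, 0) ->
  line_meets q d B <-> exists2 s, s \in B & cross d q s.1 * cross d q s.2 <= 0.
Proof.
move=> dn; split.
  case=> t [s sB [l [l01 E]]]; exists s => //.
  apply: (convex_root_mul_le0 l01); rewrite -cross_lerp (_ : lerp _ _ _ = shift q d t); last exact: esym E.
  rewrite /cross /shift /=; ring.
case=> s sB /mul_le0_convex_root [l [l01 E]].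
have x0 : cross d q (lerp s.1 s.2 l) = 0 by rewrite cross_lerp.
exists (dotp d q (lerp s.1 s.2 l) / norm2 d), s => //; exists l; split => //.
exact/esym/cross_eq0_shift.
Qed.

Lemma notRB_separated q B : ~ RB B q ->
  exists2 d, d != (0, 0) & forall s, s \in B -> 0 < cross d q s.1 * cross d q s.2.
Proof.
move=> /existsNP [d /not_implyP [dn nm]]; exists d => // s sB.
by rewrite ltNge; apply/negP => le0; apply/nm/line_meetsP => //; exists s.
Qed.

Lemma segment_shift q d (A E : R) : A * E <= 0 -> segment (shift q d A) (shift q d E) q.
Proof.
move=> /mul_le0_convex_root [l [l01 e]]; exists l; split => //.
have sh (c z : R) : (1 - l) * (c + A * z) + l * (c + E * z) = c + ((1 - l) * A + l * E) * z.
  by ring.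
by rewrite /shift /= !sh e !mul0r !addr0 -surjective_pairing.
Qed.

Lemma cross_segment_eq0 a b x : segment a b x -> cross (vec a b) a x = 0.
Proof. by case=> l [_ ->]; rewrite /cross /vec /=; ring. Qed.

Lemma lerp_continuous x y : continuous (lerp x y).
Proof.
move=> t; have comb c e : (fun l : R => (1 - l) * c + l * e) @ t --> (1 - t) * c + t * e.
  apply: cvgD; apply: cvgM; by [apply: cvgB; [exact: cvg_cst|exact: cvg_id]|exact: cvg_cst|exact: cvg_id].
exact: cvg_pair (comb _ _) (comb _ _).
Qed.

Lemma segment_closed a b : closed (segment a b).
Proof.
have -> : segment a b = lerp a b @` `[0 : R, 1].
  apply/seteqP; split => x.
    by case=> t [t01 ->]; exists t; rewrite //= in_itv.
  by case=> t; rewrite /= in_itv => t01 <-; exists t.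
apply: compact_closed; first exact: norm_hausdorff.
apply: continuous_compact; last exact: segment_compact.
by apply: continuous_subspaceT => t; exact: lerp_continuous.
Qed.

Lemma unionB_closed B : closed (unionB B).
Proof.
have -> : unionB B = \big[setU/set0]_(s <- B) segment s.1 s.2.
  elim: B => [|s B IH].
    by rewrite big_nil; apply/seteqP; split => x //; case=> s; rewrite in_nil.
  rewrite big_cons -IH; apply/seteqP; split => x.
    by case=> s'; rewrite in_cons => /orP[/eqP->|h]; [left|right; exists s'].
  case=> [h|[s' h1 h2]]; first by exists s; rewrite ?mem_head.
  by exists s'; rewrite ?in_cons ?h1 ?orbT.
by apply: closed_bigsetU => s _; exact: segment_closed.
Qed.

Lemma closed_segment_sub a b (E : set (pt R)) : closed E ->
  (forall t, 0 < t < 1 -> E (lerp a b t)) -> segment a b `<=` E.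
Proof.
move=> cE Eo x [t [/andP[t0 t1] ->]].
have [->|tn0] := eqVneq t 0.
  apply: (closed_cvg _ cE _ _ (cvg_at_right_filter (@lerp_continuous a b 0))).
  near=> s; apply: Eo; apply/andP; split; near: s; [exact: nbhs_right_gt|exact: nbhs_right_lt].
have [->|tn1] := eqVneq t 1.
  apply: (closed_cvg _ cE _ _ (cvg_at_left_filter (@lerp_continuous a b 1))).
  near=> s; apply: Eo; apply/andP; split; near: s; [exact: nbhs_left_gt|exact: nbhs_left_lt].
by apply: Eo; rewrite !lt_neqAle eq_sym tn0 tn1 t0 t1.
Unshelve. all: by end_near.
Qed.

Lemma segment_start a b : segment a b a.
Proof.
exists 0; split; first by rewrite lexx ler01.
by rewrite subr0 !mul1r !mul0r !addr0 -surjective_pairing.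
Qed.

Lemma segment_end a b : segment a b b.
Proof.
exists 1; split; first by rewrite lexx ler01.
by rewrite subrr !mul1r !mul0r !add0r -surjective_pairing.
Qed.

Lemma shift0 q d : shift q d 0 = q.
Proof. by rewrite /shift !mul0r !addr0 -surjective_pairing. Qed.

Lemma norm2_perp d : norm2 (perp d) = norm2 d.
Proof. rewrite /norm2 /=; ring. Qed.

Lemma eball_shift p d (X r : R) : `|X| * (norm2 d + 1) < r -> eball p r (shift p d X).
Proof.
move=> Xr; rewrite /eball /shift /=.
have N0 : 0 <= norm2 d by rewrite /norm2 -!expr2 addr_ge0 ?sqr_ge0.
have -> : (p.1 + X * d.1 - p.1) ^+ 2 + (p.2 + X * d.2 - p.2) ^+ 2 = X ^+ 2 * norm2 d.
  by rewrite /norm2; ring.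
have XN : X ^+ 2 * norm2 d <= (`|X| * (norm2 d + 1)) ^+ 2.
  by rewrite exprMn real_normK ?num_real // ler_wpM2l ?sqr_ge0 //; nra.
apply: le_lt_trans XN _; set y := _ * _ in Xr *.
have y0 : 0 <= y by rewrite mulr_ge0 // addr_ge0.
by rewrite !expr2; nra.
Qed.

Lemma maximal_region_local (P S : set (pt R)) p : maximal_region P S -> S p ->
  exists2 r, 0 < r & forall x, eball p r x -> (S x <-> P x).
Proof.
case=> _ /[apply] -[r [r0 E]]; exists r => // x bx.
split=> h.
  by have [] : (eball p r `&` P) x by rewrite -E.
by have [] : (eball p r `&` S) x by rewrite E.
Qed.

Section InteriorPoint.
Context {B : seq (pt R * pt R)} {p u : pt R} {T D K m : R}.
Hypotheses (u_neq0 : u != (0, 0)) (T_gt0 : 0 < T) (D_gt0 : 0 < D).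
Hypotheses (K_ge0 : 0 <= K) (m_gt0 : 0 < m).
Hypothesis p_notin_B : ~ unionB B p.
Hypothesis chord_in_RB : forall X, `|X| < T -> RB B (shift p u X).
Hypothesis off_notin_RB : forall Y, Y != 0 -> `|Y| < D -> ~ RB B (shift p (perp u) Y).
Hypothesis ends_bounded : forall s, s \in B -> `|dotp u p s.1| <= K /\ `|dotp u p s.2| <= K.
Hypothesis ends_gap : forall s, s \in B ->
  (cross u p s.1 = 0 \/ m <= `|cross u p s.1|) /\ (cross u p s.2 = 0 \/ m <= `|cross u p s.2|).

Local Notation N := (norm2 u).
Local Notation al := (dotp u p).
Local Notation be := (cross u p).

Let N_gt0 : 0 < N := norm2_gt0 u_neq0.

Lemma al_neq0_on_axis x : unionB B x -> be x = 0 -> al x != 0.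
Proof.
move=> Bx b0; apply: contraPneq p_notin_B => a0.
by rewrite -(shift0 p u) -(mul0r N^-1) -a0 -(cross_eq0_shift u_neq0 b0).
Qed.

Lemma ends_not_across s : s \in B -> be s.1 = 0 -> be s.2 = 0 -> 0 < al s.1 * al s.2.
Proof.
move=> sB b1 b2; rewrite ltNge; apply/negP => le; apply: p_notin_B; exists s => //.
have le' : al s.1 / N * (al s.2 / N) <= 0.
  by rewrite mulrACA mulr_le0_ge0 // -expr2 sqr_ge0.
by rewrite (cross_eq0_shift u_neq0 b1) (cross_eq0_shift u_neq0 b2); exact: segment_shift.
Qed.

Lemma tilted_line_hits c :
  exists2 s, s \in B & (be s.1 - c * al s.1) * (be s.2 - c * al s.2) <= 0.
Proof.
pose d : pt R := (u.1 - c * u.2, u.2 + c * u.1).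
have dn : d != (0, 0).
  apply: contraTneq N_gt0 => d0.
  have -> : N = u.1 * d.1 + u.2 * d.2 by rewrite /norm2 /=; ring.
  by rewrite d0 /= !mulr0 addr0 ltxx.
have pRB : RB B p by rewrite -(shift0 p u); apply: chord_in_RB; rewrite normr0.
have [s sB hit] := (line_meetsP dn).1 (pRB d dn); exists s => //.
have E x : cross d p x = be x - c * al x by rewrite /cross /dotp /=; ring.
by rewrite !E in hit.
Qed.

(* The line misses B, so it cannot meet the chord, whose points are in R(B);
   this bounds its slope relative to [u]. *)
Lemma separated_dir_far d Y : d != (0, 0) ->
  (forall s, s \in B -> 0 < cross d (shift p (perp u) Y) s.1 * cross d (shift p (perp u) Y) s.2) ->
  `|u.1 * d.2 - u.2 * d.1| * T <= `|Y| * `|u.1 * d.1 + u.2 * d.2|.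
Proof.
move=> dn sep; set mu := _ - _; set ka := _ + _; rewrite leNgt; apply/negP => far.
have mun : mu != 0.
  by apply: contraTneq far => ->; rewrite normr0 mul0r -leNgt mulr_ge0.
pose X := - Y * ka / mu.
have XT : `|X| < T by rewrite /X normf_div normrM normrN ltr_pdivrMr ?normr_gt0 // [T * _]mulrC.
have [s sB hit] := (line_meetsP dn).1 (chord_in_RB XT dn).
have E x : cross d (shift p u X) x = cross d (shift p (perp u) Y) x.
  rewrite (cross_rebase _ (shift p (perp u) Y)) [X in _ + X](_ : _ = 0) ?addr0 //.
  by rewrite /cross /shift /X /ka /mu /=; field.
by have := sep s sB; rewrite -!E ltNge hit.
Qed.

Lemma separating_line Y : Y != 0 -> `|Y| < D -> exists ep, `|ep| * T <= `|Y| /\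
  forall s, s \in B -> 0 < (be s.1 - (ep * al s.1 + Y * N)) * (be s.2 - (ep * al s.2 + Y * N)).
Proof.
move=> Yn YD; have [d dn sep] := notRB_separated (off_notin_RB Yn YD).
have := separated_dir_far dn sep; set mu := _ - _; set ka := _ + _ => far.
have kan : ka != 0.
  apply: contraNneq dn => ka0; move: far; rewrite ka0 normr0 mulr0 => far.
  have mu0 : mu = 0.
    by apply/normr0_eq0/eqP; rewrite eq_le normr_ge0 andbT -(pmulr_lle0 _ T_gt0).
  have e1 : N * d.1 = u.1 * ka - u.2 * mu by rewrite /ka /mu /norm2; ring.
  have e2 : N * d.2 = u.2 * ka + u.1 * mu by rewrite /ka /mu /norm2; ring.
  rewrite ka0 mu0 !mulr0 subrr in e1; rewrite ka0 mu0 !mulr0 addr0 in e2.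
  move/eqP: e1; move/eqP: e2; rewrite !mulf_eq0 (gt_eqF N_gt0) /= => /eqP d2 /eqP d1.
  by rewrite [d]surjective_pairing d1 d2.
exists (mu / ka); split; first by rewrite normf_div mulrAC ler_pdivrMr ?normr_gt0.
move=> s sB; have := sep s sB; set q := shift p (perp u) Y.
have E x : N * cross d q x = ka * (be x - (mu / ka * al x + Y * N)).
  by rewrite /cross /dotp /q /shift /norm2 /ka /mu /=; field.
rewrite -(pmulr_rgt0 _ (mulr_gt0 N_gt0 N_gt0)) mulrACA !E mulrACA.
by rewrite pmulr_rgt0 // -expr2 exprn_even_gt0.
Qed.

Let flat (L : R -> R) := forall X, `|X| <= K -> `|L X| < m.

Lemma flat_linear c : `|c| * K < m -> flat ( *%R c).
Proof.
move=> cK X XK; rewrite normrM; apply: le_lt_trans cK.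
by rewrite ler_wpM2l.
Qed.

Lemma flat_affine ep Y : `|ep| * T <= `|Y| -> `|Y| * (K / T + N) < m ->
  flat (fun X => ep * X + Y * N).
Proof.
move=> epT YK X XK; apply: le_lt_trans (ler_normD _ _) _; apply: le_lt_trans YK.
rewrite !normrM (gtr0_norm N_gt0) [leRHS]mulrDr lerD2r.
apply: (le_trans (y := `|ep| * K)); first by rewrite ler_wpM2l.
by rewrite mulrA ler_pdivlMr // mulrAC ler_wpM2r.
Qed.

Lemma hit_segment_axis_endpoint c (L1 L2 : R -> R) s : s \in B -> c != 0 ->
  flat ( *%R c) -> flat L1 -> flat L2 ->
  (be s.1 - c * al s.1) * (be s.2 - c * al s.2) <= 0 ->
  0 < (be s.1 - L1 (al s.1)) * (be s.2 - L1 (al s.2)) ->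
  0 < (be s.1 - L2 (al s.1)) * (be s.2 - L2 (al s.2)) ->
  exists a : R, c * a * L1 a < 0 /\ c * a * L2 a < 0.
Proof.
move=> sB cn fc f1 f2 hit m1 m2; have [K1 K2] := ends_bounded sB.
have Bs1 : unionB B s.1 by exists s => //; exact: segment_start.
have Bs2 : unionB B s.2 by exists s => //; exact: segment_end.
case: (ends_gap sB) => -[b1|g1] [b2|g2].
- exfalso; have := ends_not_across sB b1 b2; rewrite ltNge => /negP; apply.
  have cc : 0 < c * c by rewrite -expr2 exprn_even_gt0.
  by move: hit; rewrite b1 b2 !sub0r mulrNN mulrACA pmulr_rle0.
- have ca : c * al s.1 != 0 by rewrite mulf_neq0 ?al_neq0_on_axis.
  rewrite b1 in hit m1 m2; exists (al s.1).
  by split; [exact: axis_endpoint_sign g2 (fc _ K2) (f1 _ K2) ca hit m1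
             |exact: axis_endpoint_sign g2 (fc _ K2) (f2 _ K2) ca hit m2].
- have ca : c * al s.2 != 0 by rewrite mulf_neq0 ?al_neq0_on_axis.
  rewrite b2 mulrC in hit; rewrite b2 mulrC in m1; rewrite b2 mulrC in m2.
  exists (al s.2).
  by split; [exact: axis_endpoint_sign g1 (fc _ K1) (f1 _ K1) ca hit m1
             |exact: axis_endpoint_sign g1 (fc _ K1) (f2 _ K1) ca hit m2].
- by case: (far_endpoints_contra g1 g2 (fc _ K1) (fc _ K2) (f1 _ K1) (f1 _ K2) hit m1).
Qed.

Lemma interior_contra : False.
Proof.
have [e0 /andP[e0_gt0 _] e0K] := small_pos_witness K_ge0 ltr01 m_gt0.
have C_ge0 : 0 <= K / T + N by rewrite addr_ge0 ?divr_ge0 // ltW.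
have [dd /andP[dd_gt0 ddD] ddm] := small_pos_witness C_ge0 D_gt0 m_gt0.
have [Pdd Ndd] : `|dd| = dd /\ `|- dd| = dd by rewrite normrN gtr0_norm.
have ddD' : `|dd| < D by rewrite Pdd.
have NddD : `|- dd| < D by rewrite Ndd.
have Ndd_neq0 : - dd != 0 by rewrite oppr_eq0 lt0r_neq0.
have [ep1 [ep1T sep1]] := separating_line (lt0r_neq0 dd_gt0) ddD'.
have [ep2 [ep2T sep2]] := separating_line Ndd_neq0 NddD.
have f1 : flat (fun X => ep1 * X + dd * N) by apply: flat_affine => //; rewrite Pdd.
have f2 : flat (fun X => ep2 * X + - dd * N) by apply: flat_affine => //; rewrite Ndd.
have [s1 s1B hit1] := tilted_line_hits e0.
have [s2 s2B hit2] := tilted_line_hits (- e0).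
have [a1 []] : exists a : R, e0 * a * (ep1 * a + dd * N) < 0 /\ e0 * a * (ep2 * a + - dd * N) < 0.
  apply: hit_segment_axis_endpoint s1B _ _ f1 f2 hit1 (sep1 _ s1B) (sep2 _ s1B).
    by rewrite lt0r_neq0.
  by apply: flat_linear; rewrite gtr0_norm.
rewrite -!mulrA !(pmulr_rlt0 _ e0_gt0) => h11 h12.
have [a2 []] : exists a : R, - e0 * a * (ep1 * a + dd * N) < 0 /\ - e0 * a * (ep2 * a + - dd * N) < 0.
  apply: hit_segment_axis_endpoint s2B _ _ f1 f2 hit2 (sep1 _ s2B) (sep2 _ s2B).
    by rewrite oppr_eq0 lt0r_neq0.
  by apply: flat_linear; rewrite normrN gtr0_norm.
rewrite -!mulrA !(mulNr e0) !oppr_lt0 !(pmulr_rgt0 _ e0_gt0) => h21 h22.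
apply: (two_lines_contra _ _ h11 h12 h21 h22); first exact: mulr_gt0.
by rewrite mulNr oppr_lt0 mulr_gt0.
Qed.

End InteriorPoint.

Lemma maximal_segment_interior B a b t : a != b ->
  maximal_region (RB B) (segment a b) -> 0 < t < 1 -> unionB B (lerp a b t).
Proof.
move=> hab Hmax /andP[t_gt0 t_lt1]; apply: contrapT => p_notin_B.
set p := lerp a b t; set u := vec a b; have u_neq0 := vec_neq0 hab.
have p_in : segment a b p by exists t; rewrite !ltW.
have [r r_gt0 near_p] := maximal_region_local Hmax p_in.
have N_ge0 : 0 <= norm2 u by rewrite /norm2 -!expr2 addr_ge0 ?sqr_ge0.
pose D := r / (norm2 u + 1).
have D_gt0 : 0 < D by rewrite divr_gt0 // ltr_wpDl.
have in_ball d X : norm2 d = norm2 u -> `|X| < D -> eball p r (shift p d X).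
  by move=> dN XD; apply: eball_shift; rewrite dN -ltr_pdivlMr // ltr_wpDl.
pose T := Num.min (Num.min t (1 - t)) D.
have T_gt0 : 0 < T by rewrite !lt_min t_gt0 subr_gt0 t_lt1 D_gt0.
have chord X : `|X| < T -> RB B (shift p u X).
  rewrite !lt_min => /andP[/andP[Xt Xt'] XD]; apply/(near_p _ (in_ball _ _ erefl XD)).
  move: Xt Xt'; rewrite !ltr_norml => /andP[? ?] /andP[? ?].
  exists (t + X); split; first by apply/andP; split; lra.
  by rewrite /shift /p /u /lerp /vec /=; congr (_, _); ring.
have off Y : Y != 0 -> `|Y| < D -> ~ RB B (shift p (perp u) Y).
  move=> Yn YD /(near_p _ (in_ball _ _ (norm2_perp u) YD)) /cross_segment_eq0.
  have -> : cross (vec a b) a (shift p (perp u) Y) = Y * norm2 u.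
    by rewrite /cross /shift /p /u /lerp /vec /norm2 /=; ring.
  by apply/eqP; rewrite mulf_neq0 // lt0r_neq0 // norm2_gt0.
have [K [m [K_ge0 m_gt0 grid]]] :=
  finite_bound_and_gap (dotp u p) (cross u p) (unzip1 B ++ unzip2 B).
have ends s : s \in B -> (s.1 \in unzip1 B ++ unzip2 B) && (s.2 \in unzip1 B ++ unzip2 B).
  by move=> sB; rewrite !mem_cat !map_f ?orbT.
apply: (interior_contra u_neq0 T_gt0 D_gt0 K_ge0 m_gt0 p_notin_B chord off) => s.
  by case/ends/andP => /grid[? _] /grid[? _].
by case/ends/andP => /grid[_ ?] /grid[_ ?].
Qed.

End Plane.

Theorem lemma1 (R : realType) (B : seq (pt R * pt R))
  (HB : forall s, s \in B -> s.1 != s.2)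
  (a b : pt R) (hab : a != b)
  (Hmax : maximal_region (RB B) (segment a b)) :
  segment a b `<=` unionB B.
Proof.
move=> x; apply: (closed_segment_sub (unionB_closed (B := B))) => t.
exact: maximal_segment_interior hab Hmax.
Qed.
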